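(* Let $A$ be a countable non-empty set of players, $\mathbf{n}\notin A$ an additional ''nature'' position owner, $C$ a finite non-empty set of choices, $d:C^*\to A\cup\{\mathbf{n}\}$, $P$ a function assigning to every $w\in d^{-1}(\{\mathbf{n}\})$ a probability distribution $P(w)$ on $C$, and for every $a\in A$ let $f_a:C^\omega\to[0,1]$ be continuous (product of discrete topologies on $C^\omega$). Then the stochastic infinite sequential game $\langle A,C,d,(f_a)_{a\in A},P\rangle$ has a subgame perfect equilibrium.
   Context: A strategy of player $a\in A$ is a function $s_a:d^{-1}(\{a\})\to C$; a strategy profile is a family of strategies, one per player. Given a profile $\sigma$ and a history $\gamma\in C^*$, the induced probability distribution on plays in $\gamma C^\omega$ is obtained by following $\gamma$, then at each history $w$ with $d(w)=a\in A$ choosing $\sigma_a(w)$, and at each history $w$ with $d(w)=\mathbf{n}$ choosing the next element at random according to $P(w)$ (independently). The payoff of player $a$ from $\gamma$ under $\sigma$ is the expected value of $f_a$ under this distribution. A profile $\sigma$ is a subgame perfect equilibrium if for no $\gamma\in C^*$, player $a$ and strategy $s_a$ of $a$ does replacing $\sigma_a$ by $s_a$ strictly increase the expected payoff of $a$ from $\gamma$. *)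

From HB Require Import structures.
From mathcomp Require Import all_boot all_order all_algebra.
From mathcomp Require Import all_classical all_reals all_analysis.
Set Implicit Arguments. Unset Strict Implicit. Unset Printing Implicit Defensive.
Import Order.TTheory GRing.Theory Num.Theory numFieldNormedType.Exports.
Local Open Scope ring_scope.

Section Game.
Variables (R : realType) (A : countType) (C : finType).

(* Owners of positions: [Some a] is player a, [None] is nature n. *)
Definition owner := option A.

Definition play := nat -> C.

(* Continuity of f : C^omega -> R for the product of discrete topologies:
   at each play p, for every eps > 0 there is a cylinder (common prefix of
   length n) on which f stays eps-close to f p. *)
Definition cont_play (f : play -> R) : Prop :=
  forall (p : play) (eps : R), 0 < eps ->
    exists n : nat, forall q : play, (forall i, (i < n)%N -> q i = p i) ->
      `|f q - f p| < eps.

(* A strategy of a player is a function from histories to choices; only its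
   values on d^-1({a}) matter. A profile gives one strategy per player. *)
Definition strategy := seq C -> C.
Definition profile := A -> strategy.

Definition upd (sigma : profile) (a : A) (s : strategy) : profile :=
  fun b => if b == a then s else sigma b.

Variables (d : seq C -> owner) (P : seq C -> {ffun C -> R}).

Definition trans (sigma : profile) (w : seq C) (c : C) : R :=
  match d w with
  | Some a => if sigma a w == c then 1 else 0
  | None => P w c
  end.

Definition cyl_prob (sigma : profile) (gamma : seq C) (n : nat)
    (u : n.-tuple C) : R :=
  \prod_(i < n) trans sigma (gamma ++ take i u) (tnth u i).

Definition complete (c0 : C) (w : seq C) : play := fun i => nth c0 w i.

Definition approx_payoff (c0 : C) (f : play -> R) (sigma : profile)
    (gamma : seq C) (n : nat) : R :=
  \sum_(u : n.-tuple C) cyl_prob sigma gamma u * f (complete c0 (gamma ++ u)).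

(* Expected value of a continuous f : C^omega -> R under the distribution
   induced by sigma from gamma: the limit of the cylinder approximations
   (which is the integral of f for the induced measure, f being continuous). *)
Definition exp_payoff (c0 : C) (f : play -> R) (sigma : profile)
    (gamma : seq C) : R :=
  limn (approx_payoff c0 f sigma gamma).

Definition is_SPE (c0 : C) (f : A -> play -> R) (sigma : profile) : Prop :=
  forall (gamma : seq C) (a : A) (s : strategy),
    ~ (exp_payoff c0 (f a) sigma gamma < exp_payoff c0 (f a) (upd sigma a s) gamma).

End Game.

From HB Require Import structures.
From mathcomp Require Import all_boot all_order all_algebra.
From mathcomp Require Import all_classical all_reals all_analysis.
From mathcomp Require Import lra zify.
Import Order.TTheory GRing.Theory Num.Theory numFieldNormedType.Exports.
Set Implicit Arguments. Unset Strict Implicit. Unset Printing Implicit Defensive.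
Local Open Scope ring_scope.

(* For a horizon L, backward induction yields a profile sigma_L that is an
   exact SPE of the game truncated at depth L.  A diagonal argument (the space
   of profiles is a countable product of finite sets) gives a profile sigma
   that agrees with some sigma_L, L arbitrarily large, on every finite set of
   histories.  Continuity of the payoffs on the compact space C^omega is
   uniform, so beyond a depth N depending only on eps the payoff moves by at
   most eps; hence a profitable deviation from sigma would yield a profitable
   deviation from sigma_L in the truncated game, which does not exist. *)

Section ClusterPoint.
Variables (X : countType) (C : finType) (c0 : C) (g : nat -> X -> C).

Definition infinitely_often (S : nat -> Prop) := forall M, exists2 n, (M <= n)%N & S n.

Lemma infinitely_often_value (S : nat -> Prop) x : infinitely_often S ->
  exists c, infinitely_often (fun n => S n /\ g n x = c).
Proof.
move=> ioS; apply: contrapT => /forallNP finite_c.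
have /boolp.choice [M HM] : forall c, exists M, forall n,
    (M <= n)%N -> ~ (S n /\ g n x = c).
  move=> c; have /existsNP [M HM] := finite_c c.
  by exists M => n Mn Sn; apply: HM; exists n.
have [n Mn Sn] := ioS (\max_c M c).
apply: (HM (g n x) n) => //.
exact: leq_trans (leq_bigmax_cond (g n x) _) Mn.
Qed.

Definition frequent_value (S : nat -> Prop) x : C :=
  xget c0 (fun c => infinitely_often (fun n => S n /\ g n x = c)).

Lemma infinitely_often_frequent_value S x : infinitely_often S ->
  infinitely_often (fun n => S n /\ g n x = frequent_value S x).
Proof.
move=> /(infinitely_often_value x) [c ioc].
exact: (xgetPex c0 (P := fun c => infinitely_often (fun n => S n /\ g n x = c))
  (ex_intro _ c ioc)).
Qed.

(* On [diag k], [g n] takes a fixed value at each x with [pickle x < k]. *)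
Fixpoint diag (k : nat) : nat -> Prop :=
  if k is k.+1 then
    if unpickle k is Some x then fun n => diag k n /\ g n x = frequent_value (diag k) x
    else diag k
  else fun _ => True.

Definition diag_limit (x : X) : C := frequent_value (diag (pickle x)) x.

Lemma infinitely_often_diag k : infinitely_often (diag k).
Proof.
elim: k => [|k IH] /=; first by move=> M; exists M.
by case: (unpickle k) => [x|] //; apply: infinitely_often_frequent_value.
Qed.

Lemma diag_decr j k n : (j <= k)%N -> diag k n -> diag j n.
Proof.
move=> /subnK <-; elim: (k - j)%N => [|i IH] //=.
by case: (unpickle _) => [x [/IH]|/IH].
Qed.

Lemma diag_limitE x n : diag (pickle x).+1 n -> g n x = diag_limit x.
Proof. by rewrite /= pickleK => -[]. Qed.

Lemma cluster_point (F : seq X) M :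
  exists2 n, (M <= n)%N & forall x, x \in F -> g n x = diag_limit x.
Proof.
have [n Mn diag_n] := infinitely_often_diag (\max_(x <- F) (pickle x).+1) M.
exists n => // x xF; apply/diag_limitE/(diag_decr _ diag_n).
by rewrite (big_rem x xF) leq_maxl.
Qed.

End ClusterPoint.

Definition modulus (R : realType) (C : finType) (f : play C -> R) (N : nat) (e : R) :=
  forall p q : play C, (forall i, (i < N)%N -> p i = q i) -> `|f p - f q| <= e.

Definition unif_cont_play (R : realType) (C : finType) (f : play C -> R) :=
  forall e, 0 < e -> exists N, modulus f N e.

Lemma cont_play_unif (R : realType) (C : finType) (c0 : C) (f : play C -> R) :
  cont_play f -> unif_cont_play f.
Proof.
move=> fc e e0; apply: contrapT => /forallNP no_modulus.
have /boolp.choice [pq Hpq] : forall N, exists pq : play C * play C,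
    (forall i, (i < N)%N -> pq.1 i = pq.2 i) /\ e < `|f pq.1 - f pq.2|.
  move=> N; have /existsNP [p /existsNP [q /not_implyP [pq_eq]]] := no_modulus N.
  by move=> /negP; rewrite -ltNge => pq_far; exists (p, q).
pose h := diag_limit c0 (fun N i => (pq N).1 i).
have [n Hn] := fc h (e / 2) (divr_gt0 e0 (ltr0n _ 2)).
have [N nN HN] := cluster_point c0 (fun N i => (pq N).1 i) (iota 0 n) n.
have [pq_eq pq_far] := Hpq N.
have near1 : `|f (pq N).1 - f h| < e / 2.
  by apply: Hn => i i_n; apply: HN; rewrite mem_iota.
have near2 : `|f (pq N).2 - f h| < e / 2.
  apply: Hn => i i_n; rewrite -pq_eq; last exact: leq_trans i_n nN.
  by apply: HN; rewrite mem_iota.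
have := ler_distD (f h) (f (pq N).1) (f (pq N).2); rewrite (distrC (f h)).
lra.
Qed.

Lemma convex_comb_dist (R : numDomainType) (C : finType) (t x : C -> R) (y e : R) :
  (forall c, 0 <= t c) -> \sum_c t c = 1 -> (forall c, `|x c - y| <= e) ->
  `|\sum_c t c * x c - y| <= e.
Proof.
move=> t_ge0 t_sum x_near.
have -> : \sum_c t c * x c - y = \sum_c t c * (x c - y).
  rewrite -[X in _ - X]mul1r -t_sum big_distrl -sumrB.
  by apply: eq_bigr => c _; rewrite mulrBr.
apply: le_trans (ler_norm_sum _ _ _) _.
apply: le_trans (_ : \sum_c t c * e <= e); last by rewrite -big_distrl /= t_sum mul1r.
by apply: ler_sum => c _; rewrite normrM ger0_norm ?ler_wpM2l.
Qed.

Lemma sum_indicator (R : pzSemiRingType) (C : finType) (s : C) (x : C -> R) :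
  \sum_c (if s == c then 1 else 0) * x c = x s.
Proof.
rewrite (bigD1 s) //= eqxx mul1r big1 ?addr0 // => c /negbTE.
by rewrite eq_sym => ->; rewrite mul0r.
Qed.

Section Approximation.
Variables (R : realType) (A : countType) (C : finType) (c0 : C).
Variables (d : seq C -> option A) (P : seq C -> {ffun C -> R}).
Hypothesis P_distr :
  forall w, d w = None -> (forall c, 0 <= P w c) /\ \sum_(c : C) P w c = 1.

Lemma trans_ge0 sigma w c : 0 <= trans d P sigma w c.
Proof.
rewrite /trans; case dw: (d w) => [a|]; first by case: (_ == _).
by case: (P_distr dw).
Qed.

Lemma sum_trans sigma w : \sum_(c : C) trans d P sigma w c = 1.
Proof.
rewrite /trans; case dw: (d w) => [a|]; last by case: (P_distr dw).
rewrite -[RHS](sum_indicator (sigma a w) (fun=> 1)).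
by apply: eq_bigr => c _; rewrite mulr1.
Qed.

Variable f : play C -> R.
Notation approx := (approx_payoff d P c0 f).

Lemma approx_payoff0 sigma gamma : approx sigma gamma 0 = f (complete c0 gamma).
Proof.
rewrite /approx_payoff (big_pred1 [tuple]) => [|u]; last exact/esym/eqP/tuple0.
by rewrite /cyl_prob big_ord0 mul1r cats0.
Qed.

Lemma approx_payoffS sigma gamma m : approx sigma gamma m.+1 =
  \sum_(c : C) trans d P sigma gamma c * approx sigma (rcons gamma c) m.
Proof.
rewrite /approx_payoff (reindex (fun p : C * m.-tuple C => [tuple of p.1 :: p.2])).
  rewrite -(pair_big xpredT xpredT (fun c (t : m.-tuple C) =>
    cyl_prob d P sigma gamma [tuple of c :: t] * f (complete c0 (gamma ++ c :: t)))).
  apply: eq_bigr => c _; rewrite big_distrr; apply: eq_bigr => t _.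
  rewrite /cyl_prob big_ord_recl /= cats0 -mulrA -cat_rcons.
  by congr (_ * (_ * _)); apply: eq_bigr => j _; rewrite /= -cat_rcons tnthS.
exists (fun u : m.+1.-tuple C => (thead u, [tuple of behead u])).
  by move=> [c t] _; congr pair; apply: val_inj.
by move=> u _; rewrite [RHS](tuple_eta u).
Qed.

Lemma eq_approx_payoff sigma tau m gamma :
  (forall w b, (size w < size gamma + m)%N -> d w = Some b -> sigma b w = tau b w) ->
  approx sigma gamma m = approx tau gamma m.
Proof.
elim: m gamma => [|m IH] gamma eq_st; first by rewrite !approx_payoff0.
rewrite !approx_payoffS; apply: eq_bigr => c _; congr (_ * _).
  rewrite /trans; case dg: (d gamma) => [b|] //.
  by rewrite eq_st // addnS ltnS leq_addr.
by apply: IH => w b; rewrite size_rcons addSnnS; apply: eq_st.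
Qed.

Lemma approx_payoff_dist sigma m gamma y e :
  (forall p, (forall i, (i < size gamma)%N -> p i = nth c0 gamma i) -> `|f p - y| <= e) ->
  `|approx sigma gamma m - y| <= e.
Proof.
elim: m gamma => [|m IH] gamma f_near; first by rewrite approx_payoff0; apply: f_near.
rewrite approx_payoffS; apply: convex_comb_dist => [c||c]; rewrite ?trans_ge0 ?sum_trans //.
apply: IH => p p_gc; apply: f_near => i i_g.
by rewrite p_gc ?size_rcons 1?ltnW // nth_rcons i_g.
Qed.

(* Both approximations average f over the same cylinders of depth
   [size gamma + m], on each of which f varies by at most e. *)
Lemma approx_payoff_tail N e sigma gamma m n : modulus f N e ->
  (N <= size gamma + m)%N -> (m <= n)%N ->
  `|approx sigma gamma n - approx sigma gamma m| <= e.
Proof.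
move=> fN + /subnK <-; move: (n - m)%N => k.
elim: m gamma => [|m IH] gamma Ngm.
  rewrite addn0 approx_payoff0; apply: approx_payoff_dist => p p_g; apply: fN => i iN.
  by rewrite p_g //; apply: leq_trans iN _; rewrite addn0 in Ngm.
rewrite addnS !approx_payoffS -sumrB.
under eq_bigr do rewrite -mulrBr.
rewrite -[X in `|X|]subr0; apply: convex_comb_dist => [c||c];
  rewrite ?trans_ge0 ?sum_trans // subr0.
by apply: IH; rewrite size_rcons addSnnS.
Qed.

Lemma approx_payoff_cvg sigma gamma :
  unif_cont_play f -> cvgn (approx sigma gamma).
Proof.
move=> f_unif; apply: cauchy_cvg; apply: cauchy_exP => eps eps0.
have [N fN] := f_unif _ (divr_gt0 eps0 (ltr0n _ 2)).
exists (approx sigma gamma N), N => // n /= Nn.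
rewrite /ball /= distrC; apply: le_lt_trans (approx_payoff_tail _ fN _ _) _.
- exact: leq_addl.
- exact: Nn.
- by rewrite ltr_pdivrMr // ltr_pMr // ltr1n.
Qed.

Lemma exp_payoff_approx N e sigma gamma m :
  unif_cont_play f -> modulus f N e ->
  (N <= size gamma + m)%N ->
  `|exp_payoff d P c0 f sigma gamma - approx sigma gamma m| <= e.
Proof.
move=> f_unif fN Ngm; have cv : cvgn (approx sigma gamma) := approx_payoff_cvg f_unif.
have tail n : (m <= n)%N -> approx sigma gamma m - e <= approx sigma gamma n
    <= approx sigma gamma m + e.
  by move=> mn; have := approx_payoff_tail sigma fN Ngm mn; rewrite ler_norml; lra.
have lim_ge : approx sigma gamma m - e <= limn (approx sigma gamma).
  by apply: limr_ge => //; exists m => // n /= /tail /andP[].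
have lim_le : limn (approx sigma gamma) <= approx sigma gamma m + e.
  by apply: limr_le => //; exists m => // n /= /tail /andP[].
by rewrite /exp_payoff ler_norml; apply/andP; split; lra.
Qed.

End Approximation.

Section BackwardInduction.
Variables (R : realType) (A : countType) (C : finType) (c0 : C).
Variables (d : seq C -> option A) (P : seq C -> {ffun C -> R}).
Hypothesis P_distr :
  forall w, d w = None -> (forall c, 0 <= P w c) /\ \sum_(c : C) P w c = 1.
Variable f : A -> play C -> R.

Definition best_move (V : seq C -> A -> R) w b : C :=
  Order.arg_max c0 xpredT (fun c => V (rcons w c) b).

Lemma best_moveP V w b c : V (rcons w c) b <= V (rcons w (best_move V w b)) b.
Proof. by rewrite /best_move; case: arg_maxP => // i _; apply. Qed.

(* [bi_value k w a]: payoff of player a from w in the game truncated k moves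
   later, every owner playing a [best_move] for itself. *)
Fixpoint bi_value (k : nat) (w : seq C) (a : A) : R :=
  match k with
  | 0 => f a (complete c0 w)
  | k.+1 => match d w with
            | Some b => bi_value k (rcons w (best_move (bi_value k) w b)) a
            | None => \sum_c P w c * bi_value k (rcons w c) a
            end
  end.

Definition bi_profile (L : nat) : profile A C :=
  fun b w => best_move (bi_value (L - size w).-1) w b.

Lemma approx_payoff_bi_profile L a k w : (size w + k)%N = L ->
  approx_payoff d P c0 (f a) (bi_profile L) w k = bi_value k w a.
Proof.
elim: k w => [|k IH] w wkL; first by rewrite approx_payoff0.
rewrite approx_payoffS /= /trans; case: (d w) => [b|].
  rewrite sum_indicator IH ?size_rcons ?addSnnS //.
  by rewrite /bi_profile -wkL -addnBAC // subnn.
by apply: eq_bigr => c _; rewrite IH // size_rcons addSnnS.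
Qed.

Lemma approx_payoff_bi_deviation L a s k w : (size w + k)%N = L ->
  approx_payoff d P c0 (f a) (upd (bi_profile L) a s) w k <= bi_value k w a.
Proof.
elim: k w => [|k IH] w wkL; first by rewrite approx_payoff0.
rewrite approx_payoffS /= /trans; case dw: (d w) => [b|].
  rewrite sum_indicator; apply: le_trans (IH _ _) _; first by rewrite size_rcons addSnnS.
  rewrite /upd; case: eqP => [->|_]; first exact: best_moveP.
  by rewrite /bi_profile -wkL -addnBAC // subnn.
apply: ler_sum => c _; apply: ler_wpM2l; first by case: (P_distr dw).
by apply: IH; rewrite size_rcons addSnnS.
Qed.

Lemma exp_payoff_deviation_le sigma a s gamma N e L :
  unif_cont_play (f a) -> modulus (f a) N e ->
  (size gamma + N <= L)%N ->
  (forall w b, (size w < size gamma + N)%N -> d w = Some b ->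
     sigma b w = bi_profile L b w) ->
  exp_payoff d P c0 (f a) (upd sigma a s) gamma <=
    exp_payoff d P c0 (f a) sigma gamma + 4 * e.
Proof.
move=> f_unif fN gNL sigma_bi.
set approx := approx_payoff d P c0 (f a).
have NgN : (N <= size gamma + N)%N by apply: leq_addl.
have [k gkL] : exists k, (size gamma + k)%N = L by exists (L - size gamma)%N; lia.
have Nk : (N <= k)%N by lia.
have dev_N : approx (upd sigma a s) gamma N = approx (upd (bi_profile L) a s) gamma N.
  by apply: eq_approx_payoff => w b w_g dw; rewrite /upd; case: eqP => // _; apply: sigma_bi.
have bi_N : approx sigma gamma N = approx (bi_profile L) gamma N.
  exact: eq_approx_payoff.
have := exp_payoff_approx c0 P_distr (upd sigma a s) f_unif fN NgN.
have := exp_payoff_approx c0 P_distr sigma f_unif fN NgN.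
have := approx_payoff_tail c0 P_distr (upd (bi_profile L) a s) fN NgN Nk.
have := approx_payoff_tail c0 P_distr (bi_profile L) fN NgN Nk.
have := approx_payoff_bi_deviation a s gkL.
rewrite -(approx_payoff_bi_profile a gkL) -/approx -dev_N -bi_N !ler_norml.
lra.
Qed.

End BackwardInduction.

Definition short_histories (C : finType) (L : nat) : seq (seq C) :=
  flatten [seq map val (enum {: k.-tuple C}) | k <- iota 0 L].

Lemma mem_short_histories (C : finType) L (w : seq C) :
  (size w < L)%N -> w \in short_histories C L.
Proof.
move=> wL; apply/flatten_mapP; exists (size w); first by rewrite mem_iota.
by apply/mapP; exists (in_tuple w); rewrite ?mem_enum.
Qed.

Theorem corollary12 (R : realType) (A : countType) (a0 : A) (C : finType) (c0 : C)
  (d : seq C -> option A) (P : seq C -> {ffun C -> R})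
  (f : A -> (nat -> C) -> R) :
  (forall w, d w = None -> (forall c, 0 <= P w c) /\ \sum_(c : C) P w c = 1) ->
  (forall a p, 0 <= f a p <= 1) ->
  (forall a, cont_play (f a)) ->
  exists sigma : profile A C, is_SPE d P c0 f sigma.
Proof.
move=> P_distr _ f_cont.
have f_unif a := cont_play_unif c0 (f_cont a).
pose g L w := if d w is Some b then bi_profile c0 d P f L b w else c0.
pose h := diag_limit c0 g.
(* One strategy serves all players: at w only the strategy of [d w] is read. *)
exists (fun _ => h) => gamma a s; apply/negP; rewrite -leNgt.
apply/ler_addgt0Pr => e e0.
have [N fN] := f_unif a (e / 4) (divr_gt0 e0 (ltr0n _ 4)).
have [L NL gL] := cluster_point c0 g (short_histories C (size gamma + N)) (size gamma + N).
rewrite [e in _ + e](_ : e = 4 * (e / 4)); last by rewrite mulrC divfK.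
apply: (exp_payoff_deviation_le P_distr s (f_unif a) fN NL).
by move=> w b /mem_short_histories/gL + dw; rewrite /g dw => ->.
Qed.
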